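(* Let $M$ be a $po$-$\Gamma$-semigroup, $f$ a fuzzy subset of $M$ and $a\in M$. If $a\le x\mu a\gamma a\rho y$ for some $x,y\in M$ and $\mu,\gamma,\rho\in\Gamma$, then $f(a)\le \big((1\circ f^2)\circ 1\big)(a)$, where $f^2=f\circ f$.
   Context: Let $M$ and $\Gamma$ be nonempty sets with a map $M\times\Gamma\times M\to M$, $(a,\gamma,b)\mapsto a\gamma b$, satisfying $(a\gamma b)\mu c=a\gamma(b\mu c)$ for all $a,b,c\in M$, $\gamma,\mu\in\Gamma$. A $po$-$\Gamma$-semigroup is such an $M$ with a partial order $\le$ such that $a\le b$ implies $a\gamma c\le b\gamma c$ and $c\gamma a\le c\gamma b$ for all $c\in M$, $\gamma\in\Gamma$. A fuzzy subset of $M$ is a map $M\to[0,1]$. $1$ denotes the fuzzy subset with $1(x)=1$ for all $x$. For $c\in M$ let $A_c=\{(y,z)\in M\times M: c\le y\gamma z \text{ for some }\gamma\in\Gamma\}$. $(f\circ g)(c)=\bigvee_{(y,z)\in A_c}\min\{f(y),g(z)\}$ if $A_c\ne\emptyset$, and $0$ otherwise. *)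

From mathcomp Require Import all_boot all_order all_algebra.
From mathcomp Require Import boolp classical_sets reals.
Set Implicit Arguments. Unset Strict Implicit. Unset Printing Implicit Defensive.
Import Order.TTheory GRing.Theory Num.Theory.
Local Open Scope ring_scope.
Local Open Scope classical_set_scope.

Definition po_gamma_semigroup (M G : Type) (op : M -> G -> M -> M)
  (le : M -> M -> Prop) : Prop :=
  [/\ (exists a : M, True), (exists g : G, True),
      (forall a b c (g m : G), op (op a g b) m c = op a g (op b m c)),
      [/\ (forall a, le a a),
          (forall a b, le a b -> le b a -> a = b) &
          (forall a b c, le a b -> le b c -> le a c)] &
      (forall a b c (g : G), le a b -> le (op a g c) (op b g c) /\ le (op c g a) (op c g b))].

Definition fuzzy (R : realType) (M : Type) (f : M -> R) : Prop :=
  forall x, 0 <= f x <= 1.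

Definition fone (R : realType) (M : Type) : M -> R := fun _ => 1.

Definition Aset (M G : Type) (op : M -> G -> M -> M) (le : M -> M -> Prop)
  (c : M) : set (M * M) :=
  [set yz | exists g : G, le c (op yz.1 g yz.2)].

Definition fcomp (R : realType) (M G : Type) (op : M -> G -> M -> M)
  (le : M -> M -> Prop) (f g : M -> R) (c : M) : R :=
  if pselect (Aset op le c !=set0)
  then sup [set Num.min (f yz.1) (g yz.2) | yz in Aset op le c]
  else 0.

(* Associativity rewrites the hypothesis as a <= (x mu (a g a)) rho y.  Each
   composition (h o k)(c) dominates min (h u) (k v) whenever c <= u gamma v,
   so f a <= (f o f)(a g a) <= (1 o f^2)(x mu (a g a)) <= ((1 o f^2) o 1)(a);
   the constant 1 drops out of the minima because all compositions of
   functions bounded by 1 are again bounded by 1. *)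
From mathcomp Require Import all_boot all_order all_algebra.
From mathcomp Require Import boolp classical_sets reals.
Import Order.TTheory GRing.Theory Num.Theory.
Local Open Scope ring_scope.
Local Open Scope classical_set_scope.

Section FuzzyComposition.

Context {R : realType} {M G : Type} {op : M -> G -> M -> M} {le : M -> M -> Prop}.

Lemma fcomp_le1 (f g : M -> R) c :
  (forall z, g z <= 1) -> fcomp op le f g c <= 1.
Proof.
move=> g_le1; rewrite /fcomp; case: pselect => [[yz Ayz]|//].
apply: ge_sup; first by exists (Num.min (f yz.1) (g yz.2)), yz.
by move=> _ [p _ <-]; rewrite ge_min g_le1 orbT.
Qed.

Lemma fcomp_ge_min (f : M -> R) {g : M -> R} {c y z gm} :
  (forall z, g z <= 1) -> le c (op y gm z) ->
  Num.min (f y) (g z) <= fcomp op le f g c.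
Proof.
move=> g_le1 c_le; have Ayz : Aset op le c (y, z) by exists gm.
rewrite /fcomp; destruct (pselect _) as [ne|no_Ayz]; last by case: no_Ayz; exists (y, z).
apply: sup_upper_bound; last by exists (y, z).
split; first by exists (Num.min (f y) (g z)), (y, z).
by exists 1 => _ [p _ <-]; rewrite ge_min g_le1 orbT.
Qed.

Hypothesis le_refl : forall c, le c c.

Lemma fcomp_self_ge {f : M -> R} {c} (gm : G) :
  (forall z, f z <= 1) -> f c <= fcomp op le f f (op c gm c).
Proof.
move=> f_le1; have := fcomp_ge_min f f_le1 (le_refl (op c gm c)).
by rewrite minxx.
Qed.

Lemma fone_fcomp_ge {g : M -> R} (x : M) (gm : G) {c} :
  (forall z, g z <= 1) -> g c <= fcomp op le (@fone R M) g (op x gm c).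
Proof.
move=> g_le1; have := fcomp_ge_min (@fone R M) g_le1 (le_refl (op x gm c)).
by rewrite /fone (min_idPr (g_le1 c)).
Qed.

Lemma fcomp_fone_ge {f : M -> R} {c d gm y} :
  (forall z, f z <= 1) -> le d (op c gm y) ->
  f c <= fcomp op le f (@fone R M) d.
Proof.
move=> f_le1 d_le; have fone_le1 : forall z, @fone R M z <= 1 by [].
have := fcomp_ge_min f fone_le1 d_le.
by rewrite /fone (min_idPl (f_le1 c)).
Qed.

End FuzzyComposition.

Theorem lemma22 (R : realType) (M G : Type) (op : M -> G -> M -> M)
  (le : M -> M -> Prop) (HM : po_gamma_semigroup op le)
  (f : M -> R) (Hf : fuzzy f) (a : M)
  (Ha : exists (x y : M) (mu g rho : G), le a (op x mu (op a g (op a rho y)))) :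
  f a <= fcomp op le (fcomp op le (@fone R M) (fcomp op le f f)) (@fone R M) a.
Proof.
case: HM => _ _ opA [le_refl _ _] _.
case: Ha => x [y [mu [g [rho a_le]]]].
have f_le1 : forall z, f z <= 1 by move=> z; case/andP: (Hf z).
have ff_le1 : forall z, fcomp op le f f z <= 1 by move=> z; exact: fcomp_le1.
have {}a_le : le a (op (op x mu (op a g a)) rho y) by rewrite !opA.
apply: le_trans (fcomp_self_ge le_refl g f_le1) _.
apply: le_trans (fone_fcomp_ge le_refl x mu ff_le1) _.
apply: fcomp_fone_ge a_le => z; exact: fcomp_le1.
Qed.
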